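(* Let $G$ be an $r$-regular finite simple graph of order $n$, $r\ge 1$. If $r$ is even, then $$\frac{1-r}{1+r}\,n\le \gamma^{0}_{st}(G)\le 0,$$ and if $r$ is odd, then $$-\frac{r^2+1}{r^2+2r-1}\,n\le \gamma^{0}_{st}(G)\le -\frac{n}{r}.$$
   Context: For a vertex $v$ of a graph $G=(V,E)$, $N(v)$ is its open neighborhood, and for $f:V\to\mathbb{R}$ and $B\subseteq V$ write $f(B)=\sum_{v\in B}f(v)$; $f(V)$ is the weight of $f$. An inverse signed total dominating function (ISTDF) of $G$ is a function $f:V\to\{-1,1\}$ such that $f(N(v))\le 0$ for every $v\in V$. The inverse signed total domination number $\gamma^{0}_{st}(G)$ is the maximum weight of an ISTDF of $G$. *)

From HB Require Import structures.
From mathcomp Require Import all_boot all_order all_algebra.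
Set Implicit Arguments. Unset Strict Implicit. Unset Printing Implicit Defensive.
Import Order.TTheory GRing.Theory Num.Theory.
Local Open Scope ring_scope.

Definition simple_graph (T : finType) (e : rel T) : Prop :=
  symmetric e /\ irreflexive e.

Definition nbhd (T : finType) (e : rel T) (v : T) : {set T} := [set u | e v u].

Definition regular (T : finType) (e : rel T) (r : nat) : Prop :=
  forall v : T, #|nbhd e v| = r.

Definition fsum (T : finType) (f : T -> int) (B : {set T}) : int :=
  \sum_(v in B) f v.

Definition weight (T : finType) (f : T -> int) : int := \sum_(v : T) f v.

Definition is_ISTDF (T : finType) (e : rel T) (f : T -> int) : Prop :=
  (forall v : T, f v = 1 \/ f v = -1) /\
  (forall v : T, fsum f (nbhd e v) <= 0).

Definition is_ISTDFb (T : finType) (e : rel T) (f : T -> int) : bool :=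
  [forall v, (f v == 1) || (f v == -1)] && [forall v, fsum f (nbhd e v) <= 0].

Definition sgn_of (T : finType) (g : {ffun T -> bool}) : T -> int :=
  fun v => if g v then 1 else -1.

(* gamma^0_st(G): maximum weight of an ISTDF (all {-1,1}-functions are
   enumerated through {ffun T -> bool}); the fallback value -#|T| is only
   reached if no ISTDF exists, which never happens (f = -1 is an ISTDF). *)
Definition gamma_st0 (T : finType) (e : rel T) : int :=
  \big[Num.max/(- (#|T|%:Z))]_(g : {ffun T -> bool} | is_ISTDFb e (sgn_of g))
     weight (sgn_of g).

From HB Require Import structures.
From mathcomp Require Import all_boot all_order all_algebra.
From mathcomp Require Import lra zify.
Import Order.TTheory GRing.Theory Num.Theory.
Set Implicit Arguments. Unset Strict Implicit. Unset Printing Implicit Defensive.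
Local Open Scope ring_scope.

(* Fix an ISTDF f of maximum weight and let P = f^-1(1), M = f^-1(-1), so that
   the weight is |P| - |M|.  By r-regularity, summing |N(v) :&: X| over all
   vertices v gives r|X|; summed this way, the local conditions
   |N(v) :&: P| <= |N(v) :&: M| give |P| <= |M|, and for odd r, where they
   are strict, r|P| + n <= r|M|.  For the lower bound, raising any vertex of
   M to +1 must violate the condition at one of its neighbours, so every
   vertex of M has a tight neighbour u, i.e. one whose neighbourhood splits
   as floor(r/2) in P and ceil(r/2) in M.  Counting M through the
   neighbourhoods of tight vertices gives |M| floor(r/2) <= r|P| ceil(r/2),
   and the stated bounds follow by elementary algebra. *)

Definition sgn_pos (T : finType) (g : {ffun T -> bool}) : {set T} :=
  [set v | g v].

Section SignFunctions.

Variable T : finType.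
Implicit Types (g : {ffun T -> bool}) (A B : {set T}).

Lemma card_setI_sum A B : #|A :&: B| = (\sum_(u in B) (u \in A))%N.
Proof.
rewrite -sum1_card big_mkcond [RHS]big_mkcond /=.
by apply: eq_bigr => u _; rewrite inE; case: (u \in A); case: (u \in B).
Qed.

Lemma card_le_sum_cover A B (N : T -> {set T}) :
  (forall v, v \in A -> exists2 u, u \in B & v \in N u) ->
  (#|A| <= \sum_(u in B) #|N u :&: A|)%N.
Proof.
move=> coverA; rewrite -sum1_card.
under [X in (_ <= X)%N]eq_bigr => u _ do rewrite card_setI_sum.
rewrite exchange_big /=; apply: leq_sum => v /coverA [u Bu vNu].
by rewrite (bigD1 u Bu) /= vNu.
Qed.

Lemma fsum_sgn_of g B :
  fsum (sgn_of g) B = #|B :&: sgn_pos g|%:Z - #|B :&: ~: sgn_pos g|%:Z.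
Proof.
rewrite /fsum (bigID (fun v => g v)) /= -!sum1_card -!natz !natr_sum -sumrN.
congr (_ + _); rewrite big_mkcond [RHS]big_mkcond /=;
  by apply: eq_bigr => v _; rewrite !inE /sgn_of; case: (v \in B); case: (g v).
Qed.

Lemma weight_fsum (f : T -> int) : weight f = fsum f [set: T].
Proof. by apply: eq_bigl => v; rewrite inE. Qed.

Lemma weight_sgn_of g : weight (sgn_of g) = #|sgn_pos g|%:Z - #|~: sgn_pos g|%:Z.
Proof. by rewrite weight_fsum fsum_sgn_of !setTI. Qed.

Lemma fsum_raise g v B : ~~ g v ->
  fsum (sgn_of [ffun x => (x == v) || g x]) B =
  fsum (sgn_of g) B + (v \in B)%:R *+ 2.
Proof.
move=> gv; rewrite /fsum.
have raiseE x : sgn_of [ffun x => (x == v) || g x] x = sgn_of g x + (x == v)%:R *+ 2.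
  by rewrite /sgn_of ffunE; case: eqP => [->|]; rewrite ?(negbTE gv) ?addr0.
rewrite (eq_bigr _ (fun x _ => raiseE x)) big_split /= sumrMnl; congr (_ + _ *+ 2).
have [vB|vNB] := boolP (v \in B).
  by rewrite (bigD1 v vB) eqxx /= big1 ?addr0 // => x /andP[_ /negbTE ->].
by rewrite big1 // => x xB; case: eqP xB => // ->; rewrite (negbTE vNB).
Qed.

Variable e : rel T.

Lemma ISTDF_sgn_ofP g :
  reflect (forall v, fsum (sgn_of g) (nbhd e v) <= 0) (is_ISTDFb e (sgn_of g)).
Proof.
have sgn_of_pm1 : [forall v, (sgn_of g v == 1) || (sgn_of g v == -1)].
  by apply/forallP => v; rewrite /sgn_of; case: (g v).
by rewrite /is_ISTDFb sgn_of_pm1; apply: forallP.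
Qed.

Lemma gamma_st0_ge g : is_ISTDFb e (sgn_of g) -> weight (sgn_of g) <= gamma_st0 e.
Proof. by move=> g_ISTDF; rewrite /gamma_st0 (bigD1 g) //= le_max lexx. Qed.

Lemma gamma_st0_attained :
  exists2 g, is_ISTDFb e (sgn_of g) & gamma_st0 e = weight (sgn_of g).
Proof.
pose attained x := exists2 g, is_ISTDFb e (sgn_of g) & x = weight (sgn_of g).
have attained_all_neg : attained (- #|T|%:Z).
  pose g0 : {ffun T -> bool} := [ffun=> false].
  have no_pos : sgn_pos g0 = set0 by apply/setP => v; rewrite !inE ffunE.
  exists g0; last by rewrite weight_sgn_of no_pos setC0 cards0 cardsT sub0r.
  by apply/ISTDF_sgn_ofP => v; rewrite fsum_sgn_of no_pos setI0 cards0 sub0r oppr_le0.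
apply: (big_ind attained) => // [x y att_x att_y | g g_ISTDF]; last by exists g.
by rewrite maxEle; case: ifP.
Qed.

End SignFunctions.

Lemma balanced_split_half a b n :
  (a <= b <= a + 1)%N -> (a + b = n)%N -> a = n./2 /\ b = uphalf n.
Proof.
move=> /andP[ab ba] abn; rewrite uphalf_half; have := odd_double_half n.
by rewrite -muln2; case: (odd n) => /=; lia.
Qed.

Section RegularGraphs.

Variables (T : finType) (e : rel T) (r : nat).
Hypotheses (e_sym : symmetric e) (e_reg : regular e r).

Lemma sum_card_nbhdI (Q : {set T}) : (\sum_v #|nbhd e v :&: Q| = r * #|Q|)%N.
Proof.
have deg u : (\sum_v (u \in nbhd e v) = r)%N.
  rewrite -(e_reg u) -[nbhd e u]setIT card_setI_sum.
  by apply: eq_big => [v|v _]; rewrite !inE // e_sym.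
under eq_bigr => v _ do rewrite card_setI_sum.
by rewrite exchange_big (eq_bigr _ (fun u _ => deg u)) sum_nat_const mulnC.
Qed.

Lemma card_nbhd_sgn_split (g : {ffun T -> bool}) v :
  (#|nbhd e v :&: sgn_pos g| + #|nbhd e v :&: ~: sgn_pos g| = r)%N.
Proof. by rewrite -setDE cardsID e_reg. Qed.

Variable g : {ffun T -> bool}.
Hypothesis g_ISTDF : is_ISTDFb e (sgn_of g).
Local Notation P := (sgn_pos g).

Lemma ISTDF_card_nbhd_le v : (#|nbhd e v :&: P| <= #|nbhd e v :&: ~: P|)%N.
Proof. by have := ISTDF_sgn_ofP _ _ g_ISTDF v; rewrite fsum_sgn_of subr_le0 lez_nat. Qed.

Lemma ISTDF_card_pos_le : (0 < r)%N -> (#|P| <= #|~: P|)%N.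
Proof.
move=> r_gt0; rewrite -(leq_pmul2l r_gt0) -!sum_card_nbhdI.
exact: leq_sum (fun v _ => ISTDF_card_nbhd_le v).
Qed.

Lemma ISTDF_odd_card_le : odd r -> (r * #|P| + #|T| <= r * #|~: P|)%N.
Proof.
move=> r_odd; rewrite -!sum_card_nbhdI -sum1_card -big_split /=.
apply: leq_sum => v _; rewrite addn1 ltn_neqAle ISTDF_card_nbhd_le andbT.
apply: contraTneq r_odd => balanced.
by rewrite -(card_nbhd_sgn_split g v) balanced addnn odd_double.
Qed.

Definition tight_set : {set T} :=
  [set u | #|nbhd e u :&: ~: P| <= #|nbhd e u :&: P| + 1]%N.

Lemma tight_card_nbhd u : u \in tight_set ->
  (#|nbhd e u :&: ~: P| * r./2 = #|nbhd e u :&: P| * uphalf r)%N.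
Proof.
rewrite inE => tight_u.
have [-> ->] := balanced_split_half (introT andP (conj (ISTDF_card_nbhd_le u) tight_u))
  (card_nbhd_sgn_split g u).
exact: mulnC.
Qed.

Hypothesis g_max :
  forall g', is_ISTDFb e (sgn_of g') -> weight (sgn_of g') <= weight (sgn_of g).

(* Raising a [-1] vertex [v] to [+1] would give a heavier function, so it must
   break the condition at some neighbour of [v], which is then tight. *)
Lemma maximal_ISTDF_tight_nbr v : v \in ~: P -> exists2 u, u \in tight_set & e u v.
Proof.
rewrite !inE => gNv; apply/exists_inP; apply: contraT => no_tight_nbr.
pose g' := [ffun x => (x == v) || g x].
have g'_ISTDF : is_ISTDFb e (sgn_of g').
  apply/ISTDF_sgn_ofP => w; rewrite fsum_raise // inE.
  have [e_wv|_] := boolP (e w v); last by rewrite addr0; apply/ISTDF_sgn_ofP.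
  have : w \notin tight_set by apply: contra no_tight_nbr => tw; apply/exists_inP; exists w.
  by rewrite inE -ltnNge fsum_sgn_of; lia.
by have := g_max g'_ISTDF; rewrite !weight_fsum fsum_raise // in_setT gerDl.
Qed.

Lemma maximal_ISTDF_card_neg_le : (#|~: P| * r./2 <= r * #|P| * uphalf r)%N.
Proof.
have cover v : v \in ~: P -> exists2 u, u \in tight_set & v \in nbhd e u.
  by move=> /maximal_ISTDF_tight_nbr [u tu e_uv]; exists u => //; rewrite inE.
apply: leq_trans (leq_mul (card_le_sum_cover cover) (leqnn _)) _.
rewrite big_distrl /= (eq_bigr _ (@tight_card_nbhd)) -big_distrl.
rewrite leq_mul2r -sum_card_nbhdI [X in (_ <= X)%N](bigID (mem tight_set)) /=.
by rewrite leq_addr orbT.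
Qed.

Lemma maximal_ISTDF_even_card_neg_le :
  (0 < r)%N -> ~~ odd r -> (#|~: P| <= r * #|P|)%N.
Proof.
move=> r_gt0 r_even; have half_gt0 : (0 < r./2)%N.
  by move: r_gt0; rewrite -(odd_double_half r) (negbTE r_even) -muln2; lia.
have := maximal_ISTDF_card_neg_le.
by rewrite uphalf_half (negbTE r_even) leq_pmul2r.
Qed.

Lemma maximal_ISTDF_odd_card_neg_le :
  odd r -> ((r - 1) * #|~: P| <= r * (r + 1) * #|P|)%N.
Proof.
move=> r_odd; have := maximal_ISTDF_card_neg_le; rewrite uphalf_half r_odd /=.
by have := odd_double_half r; rewrite r_odd -muln2; nia.
Qed.

End RegularGraphs.

Section ArithmeticBounds.

Variable R : realFieldType.
Implicit Types r p m : R.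

Lemma even_lower_bound r p m :
  0 <= r -> m <= r * p -> (1 - r) / (1 + r) * (p + m) <= p - m.
Proof. by move=> r_ge0 m_le; rewrite mulrAC ler_pdivrMr; nra. Qed.

Lemma odd_lower_bound r p m :
  1 <= r -> (r - 1) * m <= r * (r + 1) * p ->
  - ((r ^+ 2 + 1) / (r ^+ 2 + 2 * r - 1)) * (p + m) <= p - m.
Proof. by move=> r_ge1 m_le; rewrite mulNr mulrAC -mulNr ler_pdivrMr; nra. Qed.

Lemma odd_upper_bound r p m :
  0 < r -> r * p + (p + m) <= r * m -> p - m <= - ((p + m) / r).
Proof. by move=> r_gt0 p_le; rewrite -mulNr ler_pdivlMr //; lra. Qed.

End ArithmeticBounds.

Theorem theorem3p2 (T : finType) (e : rel T) (r : nat) :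
  simple_graph e -> regular e r -> (1 <= r)%N ->
  let n : rat := (#|T|%:R) in
  let g : rat := (gamma_st0 e)%:~R in
  (~~ odd r ->
     (1 - r%:R) / (1 + r%:R) * n <= g /\ g <= 0) /\
  (odd r ->
     - ((r%:R ^+ 2 + 1) / (r%:R ^+ 2 + 2 * r%:R - 1)) * n <= g /\
     g <= - (n / r%:R)).
Proof.
move=> [e_sym _] e_reg r_gt0 n g; rewrite {}/n {}/g.
have [f f_ISTDF gammaE] := gamma_st0_attained e.
have f_max f' : is_ISTDFb e (sgn_of f') -> weight (sgn_of f') <= weight (sgn_of f).
  by rewrite -gammaE; apply: gamma_st0_ge.
have -> : (gamma_st0 e)%:~R = #|sgn_pos f|%:R - #|~: sgn_pos f|%:R :> rat.
  by rewrite gammaE weight_sgn_of intrB.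
rewrite -(cardsC (sgn_pos f)) natrD.
split=> [r_even | r_odd]; split.
- apply: even_lower_bound => //; rewrite -natrM ler_nat.
  exact: maximal_ISTDF_even_card_neg_le.
- by rewrite subr_le0 ler_nat (ISTDF_card_pos_le e_sym e_reg f_ISTDF).
- apply: odd_lower_bound; first by rewrite ler1n.
  have := maximal_ISTDF_odd_card_neg_le e_sym e_reg f_ISTDF f_max r_odd.
  by rewrite -(ler_nat rat) !natrM natrB // natrD.
- apply: odd_upper_bound; first by rewrite ltr0n.
  rewrite -natrD -!natrM -natrD ler_nat cardsC.
  exact: ISTDF_odd_card_le.
Qed.
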